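(* Let $\mathcal G$ be a finite connected groupoid and $\alpha=(S_g,\alpha_g)_{g\in\mathcal G}$ a unital group-type partial action of $\mathcal G$ on a ring $S=\bigoplus_{y\in\mathcal G_0}S_y$, with $S_g=S1_g$. Let $x\in\mathcal G_0$ and $\tau=\{\tau_y\}_{y\in\mathcal G_0}$ a transversal in $\mathcal G$ for $x$ with $S_{\tau_y^{-1}}=S_x$ and $S_{\tau_y}=S_y$ for all $y\in\mathcal G_0$. Then the map $\Phi_\tau:S_x^{\alpha_{\mathcal G(x)}}\to S^{\alpha_{\mathcal G}}$, $\Phi_\tau(a)=\sum_{y\in\mathcal G_0}\alpha_{\tau_y}(a)$, is a ring isomorphism.
   Context: A groupoid is a small category with all morphisms invertible; $\mathcal G_0$ is the set of objects (identified with identity morphisms), $s(g),t(g)$ source and target, $\mathcal G(x,y)=\{g:s(g)=x,t(g)=y\}$, $\mathcal G(x)=\mathcal G(x,x)$; $gh$ is defined iff $s(g)=t(h)$; connected means all $\mathcal G(x,y)\ne\emptyset$. A partial action $\alpha=(S_g,\alpha_g)_{g\in\mathcal G}$ on a ring $S$: for each $g$, $S_{t(g)}$ is an ideal of $S$, $S_g$ an ideal of $S_{t(g)}$, $\alpha_g:S_{g^{-1}}\to S_g$ a ring isomorphism; $\alpha_x=\mathrm{id}_{S_x}$ for $x\in\mathcal G_0$; for composable $(g,h)$, $\alpha_h^{-1}(S_{g^{-1}}\cap S_h)\subseteq S_{(gh)^{-1}}$ and $\alpha_g\alpha_h(a)=\alpha_{gh}(a)$ there. Unital: $S_g=S1_g$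 with $1_g$ a central idempotent. A transversal for $x$ is $\{\tau_y\}_{y\in\mathcal G_0}$ with $\tau_y\in\mathcal G(x,y)$, $\tau_x=x$; $\alpha$ is group-type if some $x$ and transversal satisfy $S_{\tau_y^{-1}}=S_x$, $S_{\tau_y}=S_y$ for all $y$. Invariants: $S^{\alpha_{\mathcal G}}=\{a\in S:\alpha_g(a1_{g^{-1}})=a1_g\ \forall g\in\mathcal G\}$ and $S_x^{\alpha_{\mathcal G(x)}}=\{a\in S_x:\alpha_g(a1_{g^{-1}})=a1_g\ \forall g\in\mathcal G(x)\}$ (the isotropy group $\mathcal G(x)$ acts partially on $S_x$ by $(S_g,\alpha_g)_{g\in\mathcal G(x)}$). *)

From mathcomp Require Import all_boot all_order all_algebra.
Set Implicit Arguments. Unset Strict Implicit. Unset Printing Implicit Defensive.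
Import GRing.Theory.
Local Open Scope ring_scope.

(* (objects are identified with identity morphisms via [idm]); [comp g h]  *)
(* is the composite gh, meaningful when [src g = tgt h]; [inv g] = g^-1.   *)
Definition is_groupoid (O G : Type) (src tgt : G -> O) (idm : O -> G)
    (comp : G -> G -> G) (inv : G -> G) : Prop :=
  [/\ (forall x, src (idm x) = x /\ tgt (idm x) = x),
      (forall g h, src g = tgt h -> src (comp g h) = src h /\ tgt (comp g h) = tgt g),
      (forall g h k, src g = tgt h -> src h = tgt k ->
          comp (comp g h) k = comp g (comp h k)),
      (forall g, comp (idm (tgt g)) g = g /\ comp g (idm (src g)) = g) &
      (forall g, [/\ src (inv g) = tgt g, tgt (inv g) = src g,
                    comp g (inv g) = idm (tgt g) & comp (inv g) g = idm (src g)])].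

Definition groupoid_connected (O G : Type) (src tgt : G -> O) : Prop :=
  forall x y : O, exists g : G, src g = x /\ tgt g = y.

(* Unital data: S_g = S 1_g with 1_g a central idempotent.                  *)
Definition central_idempotent (S : pzRingType) (e : S) : Prop :=
  e * e = e /\ forall a : S, a * e = e * a.

Definition inS (S : pzRingType) (G : Type) (e : G -> S) (g : G) (a : S) : Prop :=
  exists b : S, a = b * e g.

(* f : S_dom -> S_cod (as a total map on S) is a ring isomorphism *)
Definition ring_iso_on (S : pzRingType) (Dom Cod : S -> Prop) (f : S -> S) : Prop :=
  [/\ (forall a b, Dom a -> Dom b -> f (a + b) = f a + f b),
      (forall a b, Dom a -> Dom b -> f (a * b) = f a * f b),
      (forall a, Dom a -> Cod (f a)),
      (forall a b, Dom a -> Dom b -> f a = f b -> a = b) &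
      (forall c, Cod c -> exists2 a, Dom a & f a = c)].

Definition internal_direct_sum (S : pzRingType) (O : finType) (P : O -> S -> Prop) : Prop :=
  (forall a : S, exists f : O -> S, (forall y, P y (f y)) /\ a = \sum_(y : O) f y) /\
  (forall f : O -> S, (forall y, P y (f y)) -> \sum_(y : O) f y = 0 -> forall y, f y = 0).

Definition unital_partial_action (O G : Type) (src tgt : G -> O) (idm : O -> G)
    (comp : G -> G -> G) (inv : G -> G) (S : pzRingType) (e : G -> S)
    (alpha : G -> S -> S) : Prop :=
  [/\ (forall g, central_idempotent (e g)),
      (forall g a, inS e g a -> inS e (idm (tgt g)) a),
      (forall g, ring_iso_on (inS e (inv g)) (inS e g) (alpha g)),
      (forall x a, inS e (idm x) a -> alpha (idm x) a = a) &
      (forall g h, src g = tgt h -> forall a, inS e (inv h) a ->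
          inS e (inv g) (alpha h a) -> inS e h (alpha h a) ->
          inS e (inv (comp g h)) a /\ alpha g (alpha h a) = alpha (comp g h) a)].

Definition invariants (G : Type) (inv : G -> G) (S : pzRingType) (e : G -> S)
    (alpha : G -> S -> S) (a : S) : Prop :=
  forall g : G, alpha g (a * e (inv g)) = a * e g.

Definition local_invariants (O G : Type) (src tgt : G -> O) (idm : O -> G)
    (inv : G -> G) (S : pzRingType) (e : G -> S) (alpha : G -> S -> S) (x : O) (a : S) : Prop :=
  inS e (idm x) a /\
  forall g : G, src g = x -> tgt g = x -> alpha g (a * e (inv g)) = a * e g.

Definition Phi (O : finType) (G : Type) (S : pzRingType) (alpha : G -> S -> S)
    (tau : O -> G) (a : S) : S :=
  \sum_(y : O) alpha (tau y) a.

(** Since S_{tau_y^-1} = S_x and S_{tau_y} = S_y, each alpha_{tau_y} is an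
    isomorphism S_x -> S_y, and the orthogonal decomposition 1 = sum_y 1_y
    makes Phi_tau additive and multiplicative with Phi_tau(a) 1_x = a.
    An invariant c satisfies c 1_y = alpha_{tau_y}(c 1_x), so
    c = Phi_tau(c 1_x).  Invariance of Phi_tau(a) under g : z -> w reduces,
    after cutting with 1_{g^-1} and 1_g, to
    alpha_g alpha_{tau_z} = alpha_{tau_w} alpha_k on the relevant ideal,
    where k = tau_w^-1 g tau_z lies in the isotropy group G(x) and hence
    fixes a. *)

From mathcomp Require Import all_boot all_order all_algebra.
Set Implicit Arguments. Unset Strict Implicit. Unset Printing Implicit Defensive.
Import GRing.Theory.
Local Open Scope ring_scope.

Section CentralIdempotentIdeals.

Variables (S : pzRingType) (I : Type) (e : I -> S).
Hypothesis e_central_idem : forall i, central_idempotent (e i).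

Lemma idemC i a : a * e i = e i * a.
Proof. exact: (e_central_idem i).2. Qed.

Lemma inSP i a : inS e i a <-> a = a * e i.
Proof.
split; last by move=> ->; exists a.
by case=> b ->; rewrite -mulrA (e_central_idem i).1.
Qed.

Lemma idem_mul_inS i a : inS e i a -> e i * a = a.
Proof. by move=> /inSP Ha; rewrite -idemC -Ha. Qed.

Lemma inS_idem i : inS e i (e i).
Proof. by exists (e i); rewrite (e_central_idem i).1. Qed.

Lemma inS_mull i a b : inS e i a -> inS e i (b * a).
Proof. by case=> c ->; exists (b * c); rewrite mulrA. Qed.

Lemma idem_eq_of_inS_eq i j : (forall a, inS e i a <-> inS e j a) -> e i = e j.
Proof.
move=> eq_ij.
have /idem_mul_inS <- : inS e i (e j) by apply/eq_ij; apply: inS_idem.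
by have /inSP <- : inS e j (e i) by apply/eq_ij; apply: inS_idem.
Qed.

End CentralIdempotentIdeals.

Section DirectSumOfIdeals.

Variables (S : pzRingType) (O : finType) (e : O -> S).
Hypothesis e_central_idem : forall y, central_idempotent (e y).
Hypothesis S_direct_sum : internal_direct_sum (inS e).

Lemma idem_orthogonal y z : y != z -> e y * e z = 0.
Proof.
move=> neq_yz; set p := e y * e z.
have p_y : inS e y p by rewrite /p (idemC e_central_idem); apply/inS_mull/inS_idem.
have p_z : inS e z p by apply/inS_mull/inS_idem.
pose f u := (if u == y then p else 0) - (if u == z then p else 0).
have f_in u : inS e u (f u).
  rewrite /f; case: eqP => [->|_]; case: eqP => [->|_].
  - by rewrite subrr; exists 0; rewrite mul0r.
  - by rewrite subr0.
  - by rewrite sub0r; case: p_z => b ->; exists (- b); rewrite mulNr.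
  - by rewrite subr0; exists 0; rewrite mul0r.
have f_sum0 : \sum_u f u = 0.
  by rewrite sumrB -!big_mkcond /= !big_pred1_eq subrr.
by have := S_direct_sum.2 f f_in f_sum0 y; rewrite /f eqxx (negbTE neq_yz) subr0.
Qed.

Lemma sum_idem : \sum_y e y = 1.
Proof.
have [f [f_in sum_f]] := S_direct_sum.1 1.
have f_e z : f z = e z.
  rewrite -[e z]mul1r sum_f mulr_suml (bigD1 z) //= big1 ?addr0.
    exact/(inSP e_central_idem).
  move=> y neq_yz; have /(inSP e_central_idem) -> := f_in y.
  by rewrite -mulrA idem_orthogonal ?mulr0.
by rewrite sum_f; apply: eq_bigr => z _; rewrite f_e.
Qed.

End DirectSumOfIdeals.

Section GroupoidPartialAction.

Variables (O G : Type) (src tgt : G -> O) (idm : O -> G).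
Variables (comp : G -> G -> G) (inv : G -> G).
Hypothesis G_groupoid : is_groupoid src tgt idm comp inv.

Lemma src_comp g h : src g = tgt h -> src (comp g h) = src h.
Proof. by case: G_groupoid => _ st _ _ _ /st[]. Qed.

Lemma tgt_comp g h : src g = tgt h -> tgt (comp g h) = tgt g.
Proof. by case: G_groupoid => _ st _ _ _ /st[]. Qed.

Lemma src_inv g : src (inv g) = tgt g.
Proof. by case: G_groupoid => _ _ _ _ /(_ g)[]. Qed.

Lemma tgt_inv g : tgt (inv g) = src g.
Proof. by case: G_groupoid => _ _ _ _ /(_ g)[]. Qed.

Lemma invK g : inv (inv g) = g.
Proof.
case: G_groupoid => _ _ assoc unit inverse.
have [_ _ g_ig _] := inverse g; have [_ _ ig_iig _] := inverse (inv g).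
rewrite -[LHS](unit _).1 tgt_inv src_inv -g_ig assoc.
- by rewrite ig_iig tgt_inv (unit g).2.
- by rewrite tgt_inv.
- by rewrite tgt_inv src_inv.
Qed.

Variables (S : pzRingType) (e : G -> S) (alpha : G -> S -> S).
Hypothesis act : unital_partial_action src tgt idm comp inv e alpha.

Lemma act_central_idem g : central_idempotent (e g).
Proof. by case: act. Qed.

Lemma inS_tgt g a : inS e g a -> inS e (idm (tgt g)) a.
Proof. by case: act => _ + _ _ _; apply. Qed.

Lemma inS_src g a : inS e (inv g) a -> inS e (idm (src g)) a.
Proof. by rewrite -tgt_inv; apply: inS_tgt. Qed.

Lemma alpha_iso g : ring_iso_on (inS e (inv g)) (inS e g) (alpha g).
Proof. by case: act. Qed.

Lemma alpha_inS g a : inS e (inv g) a -> inS e g (alpha g a).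
Proof. by case: (alpha_iso g) => _ _ + _ _; apply. Qed.

Lemma alphaD g a b : inS e (inv g) a -> inS e (inv g) b ->
  alpha g (a + b) = alpha g a + alpha g b.
Proof. by case: (alpha_iso g) => + _ _ _ _; apply. Qed.

Lemma alphaM g a b : inS e (inv g) a -> inS e (inv g) b ->
  alpha g (a * b) = alpha g a * alpha g b.
Proof. by case: (alpha_iso g) => _ + _ _ _; apply. Qed.

Lemma alpha_surj g c : inS e g c -> exists2 a, inS e (inv g) a & alpha g a = c.
Proof. by case: (alpha_iso g) => _ _ _ _; apply. Qed.

Lemma alpha_idem g : alpha g (e (inv g)) = e g.
Proof.
have [v v_in alpha_v] := alpha_surj (inS_idem act_central_idem g).
have /(inSP act_central_idem) -> := alpha_inS (inS_idem act_central_idem (inv g)).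
rewrite -alpha_v -alphaM ?(idem_mul_inS act_central_idem v_in) //.
exact: (inS_idem act_central_idem).
Qed.

Lemma alpha_idm y a : inS e (idm y) a -> alpha (idm y) a = a.
Proof. by case: act => _ _ _ + _; apply. Qed.

Lemma alpha_comp g h a : src g = tgt h ->
  inS e (inv h) a -> inS e (inv g) (alpha h a) ->
  inS e (inv (comp g h)) a /\ alpha g (alpha h a) = alpha (comp g h) a.
Proof. by case: act => _ _ _ _ + gh a_in ha_in; apply => //; apply: alpha_inS. Qed.

Lemma alphaK g a : inS e g a -> alpha g (alpha (inv g) a) = a.
Proof.
move=> a_in; have a_in' : inS e (inv (inv g)) a by rewrite invK.
have [_ ->] := alpha_comp (esym (tgt_inv g)) a_in' (alpha_inS a_in').
case: G_groupoid => _ _ _ _ /(_ g)[_ _ -> _].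
exact/alpha_idm/inS_tgt.
Qed.

Lemma alpha_factor t h a : tgt t = tgt h ->
  inS e (inv h) a -> inS e t (alpha h a) ->
  inS e (inv (comp (inv t) h)) a /\ alpha h a = alpha t (alpha (comp (inv t) h) a).
Proof.
move=> tgt_th a_in ha_in.
have ha_in' : inS e (inv (inv t)) (alpha h a) by rewrite invK.
have [a_in' <-] := alpha_comp (etrans (src_inv t) tgt_th) a_in ha_in'.
by rewrite alphaK.
Qed.

Lemma alpha_mul_fixed k a d : alpha k (a * e (inv k)) = a * e k ->
  inS e (inv k) d -> alpha k (a * d) = a * alpha k d.
Proof.
move=> a_fixed d_in.
rewrite -{1}(idem_mul_inS act_central_idem d_in) mulrA alphaM //; last first.
  by apply: inS_mull; apply: (inS_idem act_central_idem).
by rewrite a_fixed -mulrA (idem_mul_inS act_central_idem (alpha_inS d_in)).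
Qed.

End GroupoidPartialAction.

Section GroupTypeTransversal.

Variables (O : finType) (G : Type) (src tgt : G -> O) (idm : O -> G).
Variables (comp : G -> G -> G) (inv : G -> G).
Variables (S : pzRingType) (e : G -> S) (alpha : G -> S -> S).
Hypothesis G_groupoid : is_groupoid src tgt idm comp inv.
Hypothesis act : unital_partial_action src tgt idm comp inv e alpha.
Hypothesis S_direct_sum : internal_direct_sum (fun y => inS e (idm y)).

Variables (x : O) (tau : O -> G).
Hypothesis tau_ends : forall y, src (tau y) = x /\ tgt (tau y) = y.
Hypothesis tau_x : tau x = idm x.
Hypothesis tau_dom : forall y a, inS e (inv (tau y)) a <-> inS e (idm x) a.
Hypothesis tau_cod : forall y a, inS e (tau y) a <-> inS e (idm y) a.

Let e_central_idem := act_central_idem act.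
Let idm_central_idem y := e_central_idem (idm y).

Lemma e_inv_tau y : e (inv (tau y)) = e (idm x).
Proof. exact/(idem_eq_of_inS_eq e_central_idem)/tau_dom. Qed.

Lemma e_tau y : e (tau y) = e (idm y).
Proof. exact/(idem_eq_of_inS_eq e_central_idem)/tau_cod. Qed.

Lemma alpha_tau_inS y a : inS e (idm x) a -> inS e (idm y) (alpha (tau y) a).
Proof. by move=> /tau_dom a_in; apply/tau_cod/(alpha_inS act). Qed.

Lemma Phi_mul_inS a w t : inS e (idm x) a -> inS e (idm w) t ->
  Phi alpha tau a * t = alpha (tau w) a * t.
Proof.
move=> a_in t_in; rewrite /Phi mulr_suml (bigD1 w) //= big1 ?addr0 // => y neq_yw.
have /(inSP e_central_idem) -> := alpha_tau_inS y a_in.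
have /(inSP e_central_idem) -> := t_in.
rewrite -mulrA [e (idm y) * _]mulrA -(idemC e_central_idem) -mulrA.
by rewrite (idem_orthogonal idm_central_idem S_direct_sum neq_yw) !mulr0.
Qed.

Lemma Phi_mul_idm_x a : inS e (idm x) a -> Phi alpha tau a * e (idm x) = a.
Proof.
move=> a_in; rewrite (Phi_mul_inS a_in (inS_idem e_central_idem _)) tau_x.
by rewrite (alpha_idm act a_in); apply/esym/(inSP e_central_idem).
Qed.

Definition tau_conj g := comp (inv (tau (tgt g))) (comp g (tau (src g))).

Lemma tau_conj_composable g :
  src (inv (tau (tgt g))) = tgt (comp g (tau (src g))).
Proof.
by rewrite (src_inv G_groupoid) (tgt_comp G_groupoid) ?(tau_ends _).2.
Qed.

Lemma src_tau_conj g : src (tau_conj g) = x.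
Proof.
rewrite (src_comp G_groupoid (tau_conj_composable g)).
by rewrite (src_comp G_groupoid) ?(tau_ends _).1 ?(tau_ends _).2.
Qed.

Lemma tgt_tau_conj g : tgt (tau_conj g) = x.
Proof.
rewrite (tgt_comp G_groupoid (tau_conj_composable g)).
by rewrite (tgt_inv G_groupoid) (tau_ends _).1.
Qed.

Lemma alpha_tau_conj g u : inS e (idm x) u ->
  inS e (inv g) (alpha (tau (src g)) u) ->
  inS e (inv (tau_conj g)) u /\
  alpha g (alpha (tau (src g)) u) = alpha (tau (tgt g)) (alpha (tau_conj g) u).
Proof.
move=> u_x gu_in; have u_in := proj2 (tau_dom (src g) u) u_x.
have composable : src g = tgt (tau (src g)) by rewrite (tau_ends _).2.
have [u_in' ->] := alpha_comp act composable u_in gu_in.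
apply: (alpha_factor G_groupoid act) => //.
  by rewrite (tau_ends _).2 (tgt_comp G_groupoid composable).
apply/tau_cod; rewrite -(tgt_comp G_groupoid composable).
exact/(inS_tgt act)/(alpha_inS act).
Qed.

Lemma Phi_invariant a : local_invariants src tgt idm inv e alpha x a ->
  invariants inv e alpha (Phi alpha tau a).
Proof.
case=> a_in a_fixed g.
have inv_g_in : inS e (idm (src g)) (e (inv g)).
  exact/(inS_src G_groupoid act)/(inS_idem e_central_idem).
have g_in : inS e (idm (tgt g)) (e g).
  exact/(inS_tgt act)/(inS_idem e_central_idem).
rewrite (Phi_mul_inS a_in inv_g_in) (Phi_mul_inS a_in g_in).
(* Pulling 1_{g^-1} back to d in S_x turns the cut by 1_{g^-1} into a
   product inside S_x, where alpha_k acts. *)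
have [d d_in alpha_d] := alpha_surj act (proj2 (tau_cod _ _) inv_g_in).
have d_x := proj1 (tau_dom _ d) d_in.
have cut : alpha (tau (src g)) a * e (inv g) = alpha (tau (src g)) (a * d).
  by rewrite (alphaM act) ?alpha_d //; apply/tau_dom.
have ad_img : inS e (inv g) (alpha (tau (src g)) (a * d)).
  by rewrite -cut; apply/inS_mull/(inS_idem e_central_idem).
have d_img : inS e (inv g) (alpha (tau (src g)) d).
  by rewrite alpha_d; apply: (inS_idem e_central_idem).
have [_ ad_eq] := alpha_tau_conj (inS_mull a d_x) ad_img.
have [d_in' d_eq] := alpha_tau_conj d_x d_img.
have k_fixed := a_fixed _ (src_tau_conj g) (tgt_tau_conj g).
rewrite cut ad_eq (alpha_mul_fixed act k_fixed d_in') (alphaM act).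
- by rewrite -d_eq alpha_d (alpha_idem act).
- exact/tau_dom.
- apply/tau_dom; rewrite -(tgt_tau_conj g).
  exact/(inS_tgt act)/(alpha_inS act).
Qed.

Lemma PhiD a b : inS e (idm x) a -> inS e (idm x) b ->
  Phi alpha tau (a + b) = Phi alpha tau a + Phi alpha tau b.
Proof.
move=> a_x b_x; rewrite /Phi -big_split; apply: eq_bigr => y _.
by apply: (alphaD act); apply/tau_dom.
Qed.

Lemma PhiM a b : inS e (idm x) a -> inS e (idm x) b ->
  Phi alpha tau (a * b) = Phi alpha tau a * Phi alpha tau b.
Proof.
move=> a_x b_x; rewrite {1 3}/Phi mulr_sumr; apply: eq_bigr => y _.
by rewrite (Phi_mul_inS a_x (alpha_tau_inS y b_x)); apply: (alphaM act); apply/tau_dom.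
Qed.

Lemma Phi_idm_x : Phi alpha tau (e (idm x)) = 1.
Proof.
rewrite /Phi -(sum_idem idm_central_idem S_direct_sum); apply: eq_bigr => y _.
by rewrite -(e_inv_tau y) (alpha_idem act) e_tau.
Qed.

Lemma Phi_inj a b : inS e (idm x) a -> inS e (idm x) b ->
  Phi alpha tau a = Phi alpha tau b -> a = b.
Proof.
by move=> a_x b_x eq_ab; rewrite -(Phi_mul_idm_x a_x) -(Phi_mul_idm_x b_x) eq_ab.
Qed.

Lemma Phi_surj c : invariants inv e alpha c ->
  exists2 a, local_invariants src tgt idm inv e alpha x a & Phi alpha tau a = c.
Proof.
move=> c_fixed; exists (c * e (idm x)).
  split=> [|k src_k tgt_k]; first by exists c.
  have inv_k_x : inS e (idm x) (e (inv k)).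
    by rewrite -src_k; apply/(inS_src G_groupoid act)/(inS_idem e_central_idem).
  have k_x : inS e (idm x) (e k).
    by rewrite -tgt_k; apply/(inS_tgt act)/(inS_idem e_central_idem).
  by rewrite -!mulrA !(idem_mul_inS e_central_idem) ?c_fixed.
rewrite /Phi (eq_bigr (fun y => c * e (idm y))) => [|y _].
  by rewrite -mulr_sumr (sum_idem idm_central_idem S_direct_sum) mulr1.
by rewrite -(e_inv_tau y) c_fixed e_tau.
Qed.

End GroupTypeTransversal.

Theorem corollary3p2
  (O G : finType) (src tgt : G -> O) (idm : O -> G)
  (comp : G -> G -> G) (inv : G -> G)
  (S : pzRingType) (e : G -> S) (alpha : G -> S -> S)
  (x : O) (tau : O -> G) :
  is_groupoid src tgt idm comp inv ->
  groupoid_connected src tgt ->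
  unital_partial_action src tgt idm comp inv e alpha ->
  internal_direct_sum (fun y => inS e (idm y)) ->
  (* tau is a transversal for x *)
  (forall y, src (tau y) = x /\ tgt (tau y) = y) ->
  tau x = idm x ->
  (* group-type conditions *)
  (forall y a, inS e (inv (tau y)) a <-> inS e (idm x) a) ->
  (forall y a, inS e (tau y) a <-> inS e (idm y) a) ->
  (* Phi_tau : S_x^{alpha_{G(x)}} -> S^{alpha_G} is a ring isomorphism *)
  (forall a, local_invariants src tgt idm inv e alpha x a ->
          invariants inv e alpha (Phi alpha tau a)) /\
  [/\ (forall a b, local_invariants src tgt idm inv e alpha x a ->
          local_invariants src tgt idm inv e alpha x b ->
          Phi alpha tau (a + b) = Phi alpha tau a + Phi alpha tau b),
      (forall a b, local_invariants src tgt idm inv e alpha x a ->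
          local_invariants src tgt idm inv e alpha x b ->
          Phi alpha tau (a * b) = Phi alpha tau a * Phi alpha tau b),
      Phi alpha tau (e (idm x)) = 1,
      (forall a b, local_invariants src tgt idm inv e alpha x a ->
          local_invariants src tgt idm inv e alpha x b ->
          Phi alpha tau a = Phi alpha tau b -> a = b) &
      (forall c, invariants inv e alpha c ->
          exists2 a, local_invariants src tgt idm inv e alpha x a &
                     Phi alpha tau a = c)].
Proof.
move=> G_groupoid _ act S_direct_sum tau_ends tau_x tau_dom tau_cod.
split=> [a|]; first exact: (Phi_invariant G_groupoid act S_direct_sum tau_ends).
split.
- by move=> a b [a_x _] [b_x _]; apply: (PhiD act tau_dom).
- by move=> a b [a_x _] [b_x _]; apply: (PhiM act S_direct_sum tau_dom tau_cod).
- exact: (Phi_idm_x act S_direct_sum tau_dom tau_cod).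
- by move=> a b [a_x _] [b_x _]; apply: (Phi_inj act S_direct_sum tau_x).
- exact: (Phi_surj G_groupoid act S_direct_sum tau_dom tau_cod).
Qed.
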